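(* Let $r,k\geq2$ with $(r,k)\neq(2,2)$. There exist positive constants $K_1,K_2,K_3$ such that for any $0<\delta<\frac12$ and $c=c_{r,k}+n^{-\delta}$: $$\mu(c)-\mu_{r,k}=K_1n^{-\delta/2}+O(n^{-\delta}),\quad \alpha(c)-\alpha=K_2n^{-\delta/2}+O(n^{-\delta}),\quad \beta(c)-\beta=K_3n^{-\delta/2}+O(n^{-\delta}).$$
   Context: $f_t(\mu)=e^{-\mu}\sum_{i\geq t}\mu^i/i!$. Let $h(\mu)=\mu/f_{k-1}(\mu)^{r-1}$, $c_{r,k}=\inf_{\mu>0}(r-1)!h(\mu)$, and $\mu_{r,k}$ the unique minimizer, so $c_{r,k}=(r-1)!h(\mu_{r,k})$. For $c\geq c_{r,k}$, $\mu(c)$ is the largest solution of $c=(r-1)!h(\mu)$. Set $\alpha=f_k(\mu_{r,k})$, $\beta=\frac1r\mu_{r,k}f_{k-1}(\mu_{r,k})$, $\alpha(c)=f_k(\mu(c))$, $\beta(c)=\frac1r\mu(c)f_{k-1}(\mu(c))$. *)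

From Stdlib Require Import Reals Lra ClassicalEpsilon.
From Coquelicot Require Import Coquelicot.
Open Scope R_scope.

Definition ftail (t : nat) (mu : R) : R :=
  exp (- mu) * Series (fun i : nat => if Nat.leb t i then mu ^ i / INR (Factorial.fact i) else 0).

Definition hfun (r k : nat) (mu : R) : R :=
  mu / (ftail (k - 1) mu) ^ (r - 1).

Definition Hfun (r k : nat) (mu : R) : R := INR (Factorial.fact (r - 1)) * hfun r k mu.

Definition c_rk (r k : nat) : R :=
  real (Glb_Rbar (fun y => exists mu, 0 < mu /\ y = Hfun r k mu)).

Definition mu_rk (r k : nat) : R :=
  epsilon (inhabits 0)
    (fun m => 0 < m /\ forall x, 0 < x -> Hfun r k m <= Hfun r k x).

Definition mu_c (r k : nat) (c : R) : R :=
  epsilon (inhabits 0)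
    (fun m => 0 < m /\ c = Hfun r k m /\
              forall x, 0 < x -> c = Hfun r k x -> x <= m).

Definition alpha0 (r k : nat) : R := ftail k (mu_rk r k).
Definition beta0 (r k : nat) : R := / INR r * mu_rk r k * ftail (k - 1) (mu_rk r k).
Definition alpha_c (r k : nat) (c : R) : R := ftail k (mu_c r k c).
Definition beta_c (r k : nat) (c : R) : R :=
  / INR r * mu_c r k c * ftail (k - 1) (mu_c r k c).

Definition expansion (g : nat -> R) (K delta : R) : Prop :=
  exists C N, forall n : nat, (N <= n)%nat ->
    Rabs (g n - K * Rpower (INR n) (- (delta / 2))) <= C * Rpower (INR n) (- delta).

(* Write a = r - 1 and b = k - 1, so that (r-1)! h(mu) = a! mu / f_b(mu)^a ([scaled_h a b]).
   Its logarithmic derivative is (1 - u(mu)) / mu with u = [crit_ratio a b]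
   = a b (mu^b / b!) / E_b(mu), where E_b is the exponential series without its first b terms.
   Comparison arguments for linear ODEs show that u decreases strictly from a b at 0+ to 0 at
   +oo; hence for a b >= 2, i.e. (r, k) <> (2, 2), (r-1)! h has a unique critical point
   mu_{r,k}, a strict minimum with positive second derivative 2 A.  Taylor's theorem gives
   (r-1)! h(mu_{r,k} + x) = c_{r,k} + A x^2 + O(x^3), so on the increasing branch
   c = c_{r,k} + s^2 forces mu(c) - mu_{r,k} = s / sqrt A + O(s^2), with s = n^(-delta/2).
   Finally alpha and beta are smooth functions of mu with positive derivative at mu_{r,k}, and a
   first order Taylor bound transfers the expansion to them. *)

From Stdlib Require Import Reals Lra Lia ClassicalEpsilon.
From Coquelicot Require Import Coquelicot.
Open Scope R_scope.

Definition exp_term (m : nat) (y : R) : R := y ^ m / INR (Factorial.fact m).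

Fixpoint exp_head (n : nat) (y : R) : R :=
  match n with O => 0 | S m => exp_head m y + exp_term m y end.

Definition exp_tail (n : nat) (y : R) : R := exp y - exp_head n y.

Lemma sum_exp_terms_below (t : nat) (y : R) (N : nat) :
  sum_f_R0 (fun i => if Nat.leb t i then 0 else exp_term i y) N = exp_head (Nat.min t (S N)) y.
Proof.
  induction N as [|N IH].
  - destruct t as [|[|t]]; simpl; lra.
  - rewrite tech5, IH. destruct (Nat.leb t (S N)) eqn:Ht.
    + apply Nat.leb_le in Ht. rewrite !Nat.min_l by lia. lra.
    + apply Nat.leb_gt in Ht. rewrite !Nat.min_r by lia. reflexivity.
Qed.

Lemma is_series_exp_term (y : R) : is_series (fun i => exp_term i y) (exp y).
Proof.
  apply is_series_Reals. unfold exp. destruct (exist_exp y) as [l Hl]; simpl.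
  intros eps Heps. destruct (Hl eps Heps) as [N HN].
  exists N. intros n Hn. erewrite sum_eq; [exact (HN n Hn)|].
  intros i _. unfold exp_term, Rdiv. ring.
Qed.

Lemma ftail_exp_tail (t : nat) (y : R) : ftail t y = exp (- y) * exp_tail t y.
Proof.
  unfold ftail. f_equal. apply is_series_unique.
  assert (Hhead : is_series (fun i => if Nat.leb t i then 0 else exp_term i y) (exp_head t y)).
  { apply is_series_Reals. intros eps Heps. exists t. intros n Hn.
    rewrite sum_exp_terms_below, Nat.min_l by lia.
    unfold R_dist. rewrite Rminus_eq_0, Rabs_R0. exact Heps. }
  generalize (is_series_minus _ _ _ _ (is_series_exp_term y) Hhead). apply is_series_ext.
  intros n; simpl. change (plus ?u (opp ?v)) with (u - v). unfold exp_term. destruct (Nat.leb t n); ring.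
Qed.

Lemma is_derive_eq_val (f : R -> R) (x l l' : R) : is_derive f x l -> l = l' -> is_derive f x l'.
Proof. now intros H <-. Qed.

Lemma is_derive_Rplus (f g : R -> R) (x df dg : R) : is_derive f x df -> is_derive g x dg ->
  is_derive (fun t => f t + g t) x (df + dg).
Proof. exact (is_derive_plus f g x df dg). Qed.

Lemma is_derive_Rminus (f g : R -> R) (x df dg : R) : is_derive f x df -> is_derive g x dg ->
  is_derive (fun t => f t - g t) x (df - dg).
Proof. exact (is_derive_minus f g x df dg). Qed.

Lemma is_derive_Rmult (f g : R -> R) (x df dg : R) : is_derive f x df -> is_derive g x dg ->
  is_derive (fun t => f t * g t) x (df * g x + f x * dg).
Proof. intros Hf Hg. apply (is_derive_mult f g x df dg Hf Hg). intros; apply Rmult_comm. Qed.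

Fixpoint derivable_n (n : nat) (f : R -> R) : Prop :=
  match n with
  | O => True
  | S n => exists f', (forall x, 0 < x -> is_derive f x (f' x)) /\ derivable_n n f'
  end.

Lemma derivable_n_S n f f' : (forall x, 0 < x -> is_derive f x (f' x)) ->
  derivable_n n f' -> derivable_n (S n) f.
Proof. now exists f'. Qed.

Lemma derivable_n_pred n f : derivable_n (S n) f -> derivable_n n f.
Proof.
  revert f; induction n as [|n IH]; intros f [f' [Hf' Hn]]; [exact I|].
  exists f'. split; [exact Hf'| now apply IH].
Qed.

Lemma derivable_n_ext n f g : (forall x, 0 < x -> f x = g x) -> derivable_n n f -> derivable_n n g.
Proof.
  destruct n as [|n]; intros Hfg Hf; [exact I|].
  destruct Hf as [f' [Hf' Hn]]. exists f'. split; [|exact Hn].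
  intros x Hx. apply is_derive_ext_loc with f; [|now apply Hf'].
  assert (Hx2 : 0 < x / 2) by lra.
  exists (mkposreal _ Hx2). intros t Ht. apply Hfg.
  apply Rabs_lt_between in Ht. simpl in Ht. unfold minus, plus, opp in Ht; simpl in Ht. lra.
Qed.

Lemma derivable_n_deriv n f f' : derivable_n (S n) f ->
  (forall x, 0 < x -> is_derive f x (f' x)) -> derivable_n n f'.
Proof.
  intros [g [Hg Hn]] Hf'. apply (derivable_n_ext _ g); [|exact Hn].
  intros x Hx. rewrite <- (is_derive_unique f x (f' x)) by auto.
  symmetry. now apply is_derive_unique, Hg.
Qed.

Lemma derivable_n_const n c : derivable_n n (fun _ => c).
Proof.
  revert c; induction n as [|n IH]; intros c; [exact I|].
  apply (derivable_n_S _ _ (fun _ => 0)); [intros; auto_derive; auto | apply IH].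
Qed.

Lemma derivable_n_id n : derivable_n n (fun x => x).
Proof.
  destruct n as [|n]; [exact I|].
  apply (derivable_n_S _ _ (fun _ => 1)); [intros; auto_derive; auto | apply derivable_n_const].
Qed.

Lemma derivable_n_plus n f g : derivable_n n f -> derivable_n n g -> derivable_n n (fun x => f x + g x).
Proof.
  revert f g; induction n as [|n IH]; intros f g Hf Hg; [exact I|].
  destruct Hf as [f' [Hf' Hfn]], Hg as [g' [Hg' Hgn]].
  apply (derivable_n_S _ _ (fun x => f' x + g' x)); [|now apply IH].
  intros x Hx. apply is_derive_Rplus; auto.
Qed.

Lemma derivable_n_mult n f g : derivable_n n f -> derivable_n n g -> derivable_n n (fun x => f x * g x).
Proof.
  revert f g; induction n as [|n IH]; intros f g Hf Hg; [exact I|].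
  pose proof (derivable_n_pred _ _ Hf) as Hf0. pose proof (derivable_n_pred _ _ Hg) as Hg0.
  destruct Hf as [f' [Hf' Hfn]], Hg as [g' [Hg' Hgn]].
  apply (derivable_n_S _ _ (fun x => f' x * g x + f x * g' x)).
  - intros x Hx. apply is_derive_Rmult; auto.
  - apply derivable_n_plus; apply IH; auto.
Qed.

Lemma derivable_n_scal n c f : derivable_n n f -> derivable_n n (fun x => c * f x).
Proof. intros Hf. apply derivable_n_mult; [apply derivable_n_const | exact Hf]. Qed.

Lemma derivable_n_pow n m f : derivable_n n f -> derivable_n n (fun x => f x ^ m).
Proof.
  intros Hf. induction m as [|m IH]; simpl; [apply derivable_n_const | now apply derivable_n_mult].
Qed.

Lemma derivable_n_inv n f : (forall x, 0 < x -> f x <> 0) -> derivable_n n f ->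
  derivable_n n (fun x => / f x).
Proof.
  revert f; induction n as [|n IH]; intros f Hnz Hf; [exact I|].
  pose proof (derivable_n_pred _ _ Hf) as Hf0. destruct Hf as [f' [Hf' Hfn]].
  apply (derivable_n_S _ _ (fun x => (-1) * f' x * (/ f x * / f x))).
  - intros x Hx. eapply is_derive_eq_val; [apply is_derive_inv; [apply Hf'|]; auto|].
    specialize (Hnz x Hx). field. exact Hnz.
  - apply derivable_n_mult; [now apply derivable_n_scal|].
    apply derivable_n_mult; apply IH; auto.
Qed.

Lemma derivable_n_exp_opp n : derivable_n n (fun x => exp (- x)).
Proof.
  induction n as [|n IH]; [exact I|].
  apply (derivable_n_S _ _ (fun x => (-1) * exp (- x))); [|now apply derivable_n_scal].
  intros x _. auto_derive; auto; ring.
Qed.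

Lemma derivable_n_bounded f : derivable_n 1 f -> forall u v, 0 < u -> u <= v ->
  exists M, forall t, u <= t <= v -> Rabs (f t) <= M.
Proof.
  intros [f' [Hf' _]] u v Hu Huv.
  assert (Hcont : forall c, u <= c <= v -> continuity_pt f c).
  { intros c Hc. apply continuity_pt_filterlim, (ex_derive_continuous f).
    exists (f' c). apply Hf'. lra. }
  destruct (continuity_ab_maj f u v Huv Hcont) as [xM [HM _]].
  destruct (continuity_ab_min f u v Huv Hcont) as [xm [Hm _]].
  exists (Rmax (f xM) (- f xm)). intros t Ht.
  specialize (HM t Ht). specialize (Hm t Ht).
  apply Rabs_le. pose proof (Rmax_l (f xM) (- f xm)). pose proof (Rmax_r (f xM) (- f xm)). lra.
Qed.

Lemma mvt_is_derive (f f' : R -> R) u v : u < v ->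
  (forall c, u <= c <= v -> is_derive f c (f' c)) ->
  exists c, u < c < v /\ f v - f u = f' c * (v - u).
Proof.
  intros Huv Hf. destruct (MVT_cor2 f f' u v Huv) as [c [Hc Hcuv]].
  - intros c Hc. now apply is_derive_Reals, Hf.
  - now exists c.
Qed.

Lemma Rabs_sub_le_mvt (f f' : R -> R) u v K : u <= v ->
  (forall c, u <= c <= v -> is_derive f c (f' c)) ->
  (forall c, u <= c <= v -> Rabs (f' c) <= K) -> Rabs (f v - f u) <= K * (v - u).
Proof.
  intros Huv Hf Hbound. destruct (Req_dec u v) as [<-|Hne].
  - rewrite !Rminus_eq_0, Rabs_R0. lra.
  - destruct (mvt_is_derive f f' u v) as [c [Hc ->]]; [lra|exact Hf|].
    rewrite Rabs_mult, (Rabs_right (v - u)) by lra.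
    apply Rmult_le_compat_r; [lra|]. apply Hbound; lra.
Qed.

Lemma taylor1_bound f f1 m : 0 < m -> (forall x, 0 < x -> is_derive f x (f1 x)) ->
  derivable_n 2 f1 ->
  exists B, forall x, 0 <= x <= 1 -> Rabs (f (m + x) - f m - f1 m * x) <= B * x ^ 2.
Proof.
  intros Hm Hf [f2 [Hf1 H3]].
  destruct (derivable_n_bounded f2 H3 m (m + 1)) as [M HM]; [lra|lra|].
  assert (HM0 : 0 <= M) by (apply Rle_trans with (Rabs (f2 m)); [apply Rabs_pos|apply HM; lra]).
  exists M. intros x Hx.
  assert (Hf1_near : forall t, m <= t <= m + x -> Rabs (f1 t - f1 m) <= M * x).
  { intros t Ht. apply Rle_trans with (M * (t - m)); [|apply Rmult_le_compat_l; lra].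
    apply (Rabs_sub_le_mvt f1 f2); [lra| intros c Hc; apply Hf1; lra | intros c Hc; apply HM; lra]. }
  replace (f (m + x) - f m - f1 m * x) with
    ((f (m + x) - f1 m * (m + x)) - (f m - f1 m * m)) by ring.
  replace (M * x ^ 2) with (M * x * (m + x - m)) by ring.
  apply (Rabs_sub_le_mvt (fun t => f t - f1 m * t) (fun t => f1 t - f1 m)); [lra| |exact Hf1_near].
  intros c Hc. apply is_derive_Rminus; [apply Hf; lra|].
  auto_derive; auto; ring.
Qed.

Lemma taylor2_bound_at_critical f f1 f2 m : 0 < m ->
  (forall x, 0 < x -> is_derive f x (f1 x)) -> (forall x, 0 < x -> is_derive f1 x (f2 x)) ->
  derivable_n 2 f2 -> f1 m = 0 ->
  exists B, forall x, 0 <= x <= 1 -> Rabs (f (m + x) - f m - f2 m / 2 * x ^ 2) <= B * x ^ 3.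
Proof.
  intros Hm Hf Hf1 Hf2 Hcrit.
  destruct (taylor1_bound f1 f2 m Hm Hf1 Hf2) as [B HB].
  assert (HB0 : 0 <= B) by (specialize (HB 1 ltac:(lra)); pose proof (Rabs_pos (f1 (m + 1) - f1 m - f2 m * 1)); lra).
  exists B. intros x Hx.
  replace (f (m + x) - f m - f2 m / 2 * x ^ 2) with
    ((f (m + x) - f2 m / 2 * (m + x - m) ^ 2) - (f m - f2 m / 2 * (m - m) ^ 2)) by ring.
  replace (B * x ^ 3) with (B * x ^ 2 * (m + x - m)) by ring.
  apply (Rabs_sub_le_mvt (fun t => f t - f2 m / 2 * (t - m) ^ 2) (fun t => f1 t - f2 m * (t - m))).
  - lra.
  - intros c Hc. apply is_derive_Rminus; [apply Hf; lra|]. auto_derive; auto; field.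
  - intros c Hc. specialize (HB (c - m) ltac:(lra)).
    replace (m + (c - m)) with c in HB by ring. rewrite Hcrit, Rminus_0_r in HB.
    apply Rle_trans with (B * (c - m) ^ 2); [exact HB|].
    apply Rmult_le_compat_l; [exact HB0|]. apply pow_incr; lra.
Qed.

(* [W t * exp (- t)] has derivative [(W' t - W t) * exp (- t)]. *)
Lemma pos_of_lt_deriv (W W' : R -> R) y : 0 < y ->
  (forall t, 0 <= t <= y -> is_derive W t (W' t)) -> W 0 = 0 ->
  (forall t, 0 < t < y -> W t < W' t) -> 0 < W y.
Proof.
  intros Hy HW HW0 Hlt.
  destruct (mvt_is_derive (fun t => W t * exp (- t)) (fun t => (W' t - W t) * exp (- t)) 0 y)
    as [c [Hc Hmvt]]; [exact Hy| |].
  - intros c Hc. eapply is_derive_eq_val.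
    + apply is_derive_Rmult; [apply HW; lra|]. auto_derive; auto; reflexivity.
    + cbv beta; ring.
  - rewrite HW0, Rmult_0_l, !Rminus_0_r in Hmvt. specialize (Hlt c Hc).
    pose proof (exp_pos (- c)). pose proof (exp_pos (- y)).
    assert (0 < W y * exp (- y)) by (rewrite Hmvt; apply Rmult_lt_0_compat; [apply Rmult_lt_0_compat|]; lra).
    nra.
Qed.

Lemma nonneg_of_le_deriv (W W' : R -> R) y : 0 <= y ->
  (forall t, 0 <= t <= y -> is_derive W t (W' t)) -> W 0 = 0 ->
  (forall t, 0 < t < y -> W t <= W' t) -> 0 <= W y.
Proof.
  intros Hy HW HW0 Hle. destruct (Req_dec y 0) as [->|Hne]; [lra|].
  destruct (mvt_is_derive (fun t => W t * exp (- t)) (fun t => (W' t - W t) * exp (- t)) 0 y)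
    as [c [Hc Hmvt]]; [lra| |].
  - intros c Hc. eapply is_derive_eq_val.
    + apply is_derive_Rmult; [apply HW; lra|]. auto_derive; auto; reflexivity.
    + cbv beta; ring.
  - rewrite HW0, Rmult_0_l, !Rminus_0_r in Hmvt. specialize (Hle c Hc).
    pose proof (exp_pos (- c)). pose proof (exp_pos (- y)).
    assert (0 <= W y * exp (- y)) by (rewrite Hmvt; apply Rmult_le_pos; [apply Rmult_le_pos|]; lra).
    nra.
Qed.

Lemma sqrt_perturbation A B x s : 0 < A -> 0 < x -> 0 < s ->
  Rabs (s ^ 2 - A * x ^ 2) <= B * x ^ 3 -> B * x <= A / 2 ->
  x ^ 2 <= 2 / A * s ^ 2 /\ Rabs (x - s / sqrt A) <= 2 * B / (A * A) * s ^ 2.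
Proof.
  intros HA Hx Hs Hclose Hsmall.
  assert (Hx3 : B * x ^ 3 <= A / 2 * x ^ 2) by (replace (B * x ^ 3) with (B * x * x ^ 2) by ring; nra).
  apply Rabs_le_between in Hclose as [Hlo Hhi].
  assert (Hsq : x ^ 2 <= 2 / A * s ^ 2).
  { apply Rmult_le_reg_l with (A / 2); [lra|].
    replace (A / 2 * (2 / A * s ^ 2)) with (s ^ 2) by (field; lra). lra. }
  split; [exact Hsq|].
  set (q := sqrt A). assert (Hq : 0 < q) by now apply sqrt_lt_R0.
  assert (Hqq : q * q = A) by now apply sqrt_sqrt; lra.
  assert (HB : 0 <= B) by (pose proof (pow_lt x 3 Hx); nra).
  assert (Hfactor : (x - s / q) * (x + s / q) = (A * x ^ 2 - s ^ 2) / A).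
  { rewrite <- Hqq. field. lra. }
  assert (Hsq_q : 0 < s / q) by now apply Rdiv_lt_0_compat.
  assert (Hdiff : Rabs (x - s / q) * x <= B * x ^ 3 / A).
  { apply Rle_trans with (Rabs (x - s / q) * (x + s / q)); [apply Rmult_le_compat_l; [apply Rabs_pos | lra]|].
    rewrite <- (Rabs_right (x + s / q)) by lra. rewrite <- Rabs_mult, Hfactor.
    unfold Rdiv. rewrite Rabs_mult, (Rabs_right (/ A)) by (left; now apply Rinv_0_lt_compat).
    apply Rmult_le_compat_r; [left; now apply Rinv_0_lt_compat|]. apply Rabs_le. lra. }
  assert (Hdiff' : Rabs (x - s / q) <= B * x ^ 2 / A).
  { apply Rmult_le_reg_r with x; [exact Hx|].
    replace (B * x ^ 2 / A * x) with (B * x ^ 3 / A) by (field; lra). exact Hdiff. }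
  apply Rle_trans with (B * x ^ 2 / A); [exact Hdiff'|].
  replace (2 * B / (A * A) * s ^ 2) with (B * (2 / A * s ^ 2) / A) by (field; lra).
  apply Rmult_le_compat_r; [left; now apply Rinv_0_lt_compat|]. now apply Rmult_le_compat_l.
Qed.

Lemma INR_fact_pos n : 0 < INR (Factorial.fact n).
Proof. apply lt_0_INR, Factorial.lt_O_fact. Qed.

Lemma exp_term_pos m y : 0 < y -> 0 < exp_term m y.
Proof. intros Hy. apply Rdiv_lt_0_compat; [now apply pow_lt | apply INR_fact_pos]. Qed.

Lemma exp_term_at_0 m : (1 <= m)%nat -> exp_term m 0 = 0.
Proof. intros Hm. destruct m as [|m]; [lia|]. unfold exp_term. simpl. unfold Rdiv. ring. Qed.

Lemma mul_exp_term m y : y * exp_term m y = INR (S m) * exp_term (S m) y.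
Proof.
  unfold exp_term. change (Factorial.fact (S m)) with (S m * Factorial.fact m)%nat.
  rewrite mult_INR. pose proof (INR_fact_pos m). pose proof (lt_0_INR (S m) ltac:(lia)).
  simpl pow. field. lra.
Qed.

Lemma is_derive_exp_term_S m y : is_derive (exp_term (S m)) y (exp_term m y).
Proof.
  unfold exp_term. eapply is_derive_eq_val; [auto_derive; auto; reflexivity|].
  change (match m with 0%nat => 1 | S _ => INR m + 1 end) with (INR (S m)).
  change (Factorial.fact m + m * Factorial.fact m)%nat with (S m * Factorial.fact m)%nat.
  rewrite mult_INR. pose proof (INR_fact_pos m). pose proof (lt_0_INR (S m) ltac:(lia)).
  simpl Nat.pred. field. lra.
Qed.

Lemma is_derive_exp_term m y : (1 <= m)%nat -> is_derive (exp_term m) y (exp_term (m - 1) y).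
Proof. intros Hm. destruct m as [|m]; [lia|]. rewrite Nat.sub_succ, Nat.sub_0_r. apply is_derive_exp_term_S. Qed.

Lemma euler_exp_term m y : exists d, is_derive (exp_term m) y d /\ y * d = INR m * exp_term m y.
Proof.
  destruct m as [|m].
  - exists 0. split; [unfold exp_term; auto_derive; auto; ring | simpl; ring].
  - exists (exp_term m y). split; [apply is_derive_exp_term_S | apply mul_exp_term].
Qed.

Lemma is_derive_exp_head n y : is_derive (exp_head (S n)) y (exp_head n y).
Proof.
  induction n as [|n IH].
  - simpl. unfold exp_term. auto_derive; auto. simpl. lra.
  - change (exp_head (S (S n))) with (fun y => exp_head (S n) y + exp_term (S n) y).
    eapply is_derive_eq_val; [apply is_derive_Rplus; [exact IH | apply is_derive_exp_term_S]|].
    reflexivity.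
Qed.

Lemma exp_head_nonneg n y : 0 <= y -> 0 <= exp_head n y.
Proof.
  intros Hy. induction n as [|n IH]; simpl; [lra|].
  apply Rplus_le_le_0_compat; [exact IH|].
  apply Rmult_le_pos; [now apply pow_le | left; apply Rinv_0_lt_compat, INR_fact_pos].
Qed.

Lemma exp_head_at_0 n : (1 <= n)%nat -> exp_head n 0 = 1.
Proof.
  induction n as [|[|n] IH]; intros Hn; [lia| |].
  - unfold exp_head, exp_term. simpl. field.
  - simpl exp_head. simpl exp_head in IH. rewrite IH by lia. rewrite (exp_term_at_0 (S n)) by lia. ring.
Qed.

Section ExpTail.
Variable b : nat.
Hypothesis Hb : (1 <= b)%nat.

Lemma is_derive_exp_tail y : is_derive (exp_tail b) y (exp_tail b y + exp_term (b - 1) y).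
Proof.
  destruct b as [|m]; [lia|]. unfold exp_tail.
  eapply is_derive_eq_val.
  - apply is_derive_Rminus; [apply is_derive_Reals, derivable_pt_lim_exp | apply is_derive_exp_head].
  - simpl. rewrite Nat.sub_0_r. ring.
Qed.

Lemma exp_tail_at_0 : exp_tail b 0 = 0.
Proof. unfold exp_tail. rewrite exp_0, exp_head_at_0 by exact Hb. ring. Qed.

Lemma exp_tail_pos y : 0 < y -> 0 < exp_tail b y.
Proof.
  intros Hy. apply (pos_of_lt_deriv (exp_tail b) (fun t => exp_tail b t + exp_term (b - 1) t)).
  - exact Hy.
  - intros t _. apply is_derive_exp_tail.
  - exact exp_tail_at_0.
  - intros t Ht. pose proof (exp_term_pos (b - 1) t (proj1 Ht)). lra.
Qed.

Lemma exp_tail_le y : 0 <= y -> exp_tail b y <= exp_term b y * exp y.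
Proof.
  intros Hy. cut (0 <= exp_term b y * exp y - exp_tail b y); [lra|].
  apply (nonneg_of_le_deriv (fun t => exp_term b t * exp t - exp_tail b t)
    (fun t => (exp_term b t * exp t - exp_tail b t) + exp_term (b - 1) t * (exp t - 1))).
  - exact Hy.
  - intros t _. eapply is_derive_eq_val.
    + apply is_derive_Rminus; [|apply is_derive_exp_tail].
      apply is_derive_Rmult; [now apply is_derive_exp_term | apply is_derive_Reals, derivable_pt_lim_exp].
    + ring.
  - rewrite exp_tail_at_0, exp_term_at_0 by exact Hb. ring.
  - intros t Ht. pose proof (exp_term_pos (b - 1) t (proj1 Ht)).
    assert (1 <= exp t) by (pose proof (exp_ineq1_le t); lra). nra.
Qed.

Lemma exp_tail_ge y : 0 <= y -> exp_term b y + exp_term (S b) y <= exp_tail b y.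
Proof.
  intros Hy. cut (0 <= exp_tail b y - exp_term b y - exp_term (S b) y); [lra|].
  apply (nonneg_of_le_deriv (fun t => exp_tail b t - exp_term b t - exp_term (S b) t)
    (fun t => (exp_tail b t - exp_term b t - exp_term (S b) t) + exp_term (S b) t)).
  - exact Hy.
  - intros t _. eapply is_derive_eq_val.
    + apply is_derive_Rminus; [|apply is_derive_exp_term_S].
      apply is_derive_Rminus; [apply is_derive_exp_tail | now apply is_derive_exp_term].
    + ring.
  - rewrite exp_tail_at_0, !exp_term_at_0 by lia. ring.
  - intros t Ht. pose proof (exp_term_pos (S b) t (proj1 Ht)). lra.
Qed.

Definition tail_defect y := y * (exp_tail b y + exp_term (b - 1) y) - INR b * exp_tail b y.

Lemma is_derive_tail_defect y : is_derive tail_defect y (tail_defect y + exp_tail b y).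
Proof.
  destruct (euler_exp_term (b - 1) y) as [d [Hd Heuler]].
  unfold tail_defect. eapply is_derive_eq_val.
  - apply is_derive_Rminus.
    + apply is_derive_Rmult; [auto_derive; auto|].
      apply is_derive_Rplus; [apply is_derive_exp_tail | exact Hd].
    + apply is_derive_scal, is_derive_exp_tail.
  - rewrite minus_INR in Heuler by exact Hb. simpl INR in Heuler. nra.
Qed.

Lemma tail_defect_pos y : 0 < y -> 0 < tail_defect y.
Proof.
  intros Hy. apply (pos_of_lt_deriv tail_defect (fun t => tail_defect t + exp_tail b t)).
  - exact Hy.
  - intros t _. apply is_derive_tail_defect.
  - unfold tail_defect. rewrite exp_tail_at_0. ring.
  - intros t Ht. pose proof (exp_tail_pos t (proj1 Ht)). lra.
Qed.

End ExpTail.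

Lemma is_derive_ftail t y : (1 <= t)%nat -> is_derive (ftail t) y (exp (- y) * exp_term (t - 1) y).
Proof.
  intros Ht. apply (is_derive_ext (fun z => exp (- z) * exp_tail t z)).
  { intros z. symmetry. apply ftail_exp_tail. }
  eapply is_derive_eq_val.
  - apply is_derive_Rmult; [auto_derive; auto | now apply is_derive_exp_tail].
  - cbv beta. ring.
Qed.

Lemma ftail_pos t y : (1 <= t)%nat -> 0 < y -> 0 < ftail t y.
Proof. intros Ht Hy. rewrite ftail_exp_tail. apply Rmult_lt_0_compat; [apply exp_pos | now apply exp_tail_pos]. Qed.

Lemma ftail_le_1 t y : 0 <= y -> ftail t y <= 1.
Proof.
  intros Hy. rewrite ftail_exp_tail. unfold exp_tail.
  rewrite Rmult_minus_distr_l, <- exp_plus, Rplus_opp_l, exp_0.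
  pose proof (exp_head_nonneg t y Hy). pose proof (exp_pos (- y)). nra.
Qed.

Lemma derivable_n_exp_term n m : derivable_n n (exp_term m).
Proof. apply derivable_n_mult; [apply derivable_n_pow, derivable_n_id | apply derivable_n_const]. Qed.

Lemma derivable_n_ftail n t : (1 <= t)%nat -> derivable_n n (ftail t).
Proof.
  intros Ht. apply (derivable_n_ext _ (fun y => exp (- y) * exp_tail t y)).
  { intros y _. symmetry. apply ftail_exp_tail. }
  apply derivable_n_mult; [apply derivable_n_exp_opp|].
  induction n as [|n IH]; [exact I|].
  apply (derivable_n_S _ _ (fun y => exp_tail t y + exp_term (t - 1) y)).
  - intros y _. now apply is_derive_exp_tail.
  - apply derivable_n_plus; [exact IH | apply derivable_n_exp_term].
Qed.

Lemma exp_half_lt_2 : exp (1 / 2) < 2.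
Proof.
  pose proof exp_le_3. pose proof (exp_pos (1 / 2)).
  assert (exp 1 = exp (1 / 2) * exp (1 / 2)) by (rewrite <- exp_plus; f_equal; field).
  nra.
Qed.

Definition scaled_h (a b : nat) (y : R) : R := INR (Factorial.fact a) * (y / ftail b y ^ a).

Definition crit_ratio (a b : nat) (y : R) : R := INR a * y * exp_term (b - 1) y / exp_tail b y.

Section ScaledH.
Variables a b : nat.
Hypothesis Ha : (1 <= a)%nat.
Hypothesis Hb : (1 <= b)%nat.

Lemma scaled_h_pos y : 0 < y -> 0 < scaled_h a b y.
Proof.
  intros Hy. apply Rmult_lt_0_compat; [apply INR_fact_pos|].
  apply Rdiv_lt_0_compat; [exact Hy | now apply pow_lt, ftail_pos].
Qed.

Lemma is_derive_scaled_h y : 0 < y ->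
  is_derive (scaled_h a b) y (scaled_h a b y * (1 - crit_ratio a b y) / y).
Proof.
  intros Hy. pose proof (exp_tail_pos b Hb y Hy) as HE. pose proof (exp_pos (- y)).
  unfold scaled_h, Rdiv. eapply is_derive_eq_val.
  - apply is_derive_scal, is_derive_Rmult; [auto_derive; auto|].
    apply is_derive_inv; [apply is_derive_pow, is_derive_ftail; exact Hb|].
    apply pow_nonzero. pose proof (ftail_pos b y Hb Hy). lra.
  - unfold crit_ratio. rewrite ftail_exp_tail. destruct a as [|a']; [lia|].
    simpl Nat.pred. simpl pow. field. repeat split; try lra. apply pow_nonzero. nra.
Qed.

Lemma is_derive_crit_ratio y : 0 < y ->
  is_derive (crit_ratio a b) y (- INR a * exp_term (b - 1) y * tail_defect b y / exp_tail b y ^ 2).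
Proof.
  intros Hy. pose proof (exp_tail_pos b Hb y Hy) as HE.
  destruct (euler_exp_term (b - 1) y) as [d [Hd Heuler]].
  unfold crit_ratio, tail_defect, Rdiv. eapply is_derive_eq_val.
  - apply is_derive_Rmult; [apply is_derive_Rmult; [apply is_derive_scal; auto_derive; auto | exact Hd]|].
    apply is_derive_inv; [now apply is_derive_exp_tail | lra].
  - rewrite minus_INR in Heuler by exact Hb. simpl INR in Heuler.
    cbv beta. replace (INR a * y * d) with (INR a * (y * d)) by ring. rewrite Heuler.
    field. lra.
Qed.

Lemma crit_slope_pos y : 0 < y ->
  0 < INR a * exp_term (b - 1) y * tail_defect b y / exp_tail b y ^ 2.
Proof.
  intros Hy. pose proof (lt_0_INR a ltac:(lia)). pose proof (exp_term_pos (b - 1) y Hy).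
  pose proof (tail_defect_pos b Hb y Hy). pose proof (exp_tail_pos b Hb y Hy).
  apply Rdiv_lt_0_compat; [|now apply pow_lt]. apply Rmult_lt_0_compat; [|lra]. nra.
Qed.

Lemma crit_ratio_decreasing x y : 0 < x -> x < y -> crit_ratio a b y < crit_ratio a b x.
Proof.
  intros Hx Hxy.
  destruct (mvt_is_derive (crit_ratio a b)
    (fun t => - INR a * exp_term (b - 1) t * tail_defect b t / exp_tail b t ^ 2) x y)
    as [c [Hc Hmvt]]; [exact Hxy | intros c Hc; apply is_derive_crit_ratio; lra|].
  pose proof (crit_slope_pos c ltac:(lra)) as Hslope.
  assert (Hneg : - INR a * exp_term (b - 1) c * tail_defect b c / exp_tail b c ^ 2 < 0).
  { unfold Rdiv in *. rewrite !Ropp_mult_distr_l_reverse. lra. }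
  nra.
Qed.

Lemma crit_ratio_eq y : crit_ratio a b y = INR a * INR b * exp_term b y / exp_tail b y.
Proof.
  unfold crit_ratio. rewrite Rmult_assoc, mul_exp_term.
  replace (S (b - 1)) with b by lia. unfold Rdiv. ring.
Qed.

(* [crit_ratio] decreases from [a b >= 2] at [0+] to [0] at [+oo]; it is evaluated at [1/2]
   and at [a b (b + 1)]. *)
Lemma exists_crit_point : (2 <= a * b)%nat -> exists m, 0 < m /\ crit_ratio a b m = 1.
Proof.
  intros Hab.
  assert (Hab' : 2 <= INR a * INR b) by (rewrite <- mult_INR; apply (le_INR 2); exact Hab).
  assert (HbR : 1 <= INR b) by (apply (le_INR 1); exact Hb).
  set (Y := INR a * INR b * (INR b + 1)).
  assert (HY : 1 / 2 < Y) by (unfold Y; nra).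
  assert (Hleft : 1 < crit_ratio a b (1 / 2)).
  { rewrite crit_ratio_eq.
    pose proof (exp_tail_le b Hb (1 / 2) ltac:(lra)). pose proof (exp_tail_pos b Hb (1 / 2) ltac:(lra)).
    pose proof (exp_term_pos b (1 / 2) ltac:(lra)). pose proof exp_half_lt_2. pose proof (exp_pos (1 / 2)).
    apply Rlt_div_r; [lra|]. nra. }
  assert (Hright : crit_ratio a b Y < 1).
  { rewrite crit_ratio_eq.
    pose proof (exp_tail_ge b Hb Y ltac:(lra)) as Hge. pose proof (exp_tail_pos b Hb Y ltac:(lra)).
    pose proof (exp_term_pos b Y ltac:(lra)).
    assert (HS : exp_term (S b) Y = INR a * INR b * exp_term b Y).
    { apply Rmult_eq_reg_l with (INR (S b)); [|rewrite S_INR; lra].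
      rewrite <- mul_exp_term, S_INR. unfold Y. ring. }
    apply Rlt_div_l; [lra|]. nra. }
  destruct (Ranalysis5.IVT_interv (fun t => 1 - crit_ratio a b t) (1 / 2) Y) as [m [Hm Hm1]].
  - intros t Ht. apply continuity_pt_minus; [apply continuity_pt_const; intros ? ?; reflexivity|].
    apply continuity_pt_filterlim, (ex_derive_continuous (crit_ratio a b)).
    eexists. apply is_derive_crit_ratio. lra.
  - exact HY.
  - lra.
  - lra.
  - exists m. split; lra.
Qed.

Lemma scaled_h_ge_id y : 0 < y -> y <= scaled_h a b y.
Proof.
  intros Hy. unfold scaled_h.
  pose proof (ftail_pos b y Hb Hy). pose proof (ftail_le_1 b y ltac:(lra)).
  assert (Hpow : 0 < ftail b y ^ a <= 1).
  { split; [now apply pow_lt|]. rewrite <- (pow1 a). apply pow_incr. lra. }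
  assert (1 <= INR (Factorial.fact a)) by (apply (le_INR 1), Factorial.lt_O_fact).
  assert (y <= y / ftail b y ^ a) by (apply Rle_div_r; nra).
  nra.
Qed.

Lemma derivable_n_scaled_h n : derivable_n n (scaled_h a b).
Proof.
  apply derivable_n_scal, derivable_n_mult; [apply derivable_n_id|].
  apply derivable_n_inv; [|now apply derivable_n_pow, derivable_n_ftail].
  intros y Hy. apply pow_nonzero. pose proof (ftail_pos b y Hb Hy). lra.
Qed.

Lemma scaled_h_mvt x y : 0 < x -> x < y -> exists c, x < c < y /\
  scaled_h a b y - scaled_h a b x = scaled_h a b c * (1 - crit_ratio a b c) / c * (y - x).
Proof.
  intros Hx Hxy. apply mvt_is_derive; [exact Hxy|]. intros c Hc. apply is_derive_scaled_h. lra.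
Qed.

Variable m0 : R.
Hypothesis Hm0 : 0 < m0.
Hypothesis Hcrit : crit_ratio a b m0 = 1.

Lemma scaled_h_decreasing x y : 0 < x -> x < y -> y <= m0 -> scaled_h a b y < scaled_h a b x.
Proof.
  intros Hx Hxy Hy. destruct (scaled_h_mvt x y Hx Hxy) as [c [Hc Hdiff]].
  assert (crit_ratio a b m0 < crit_ratio a b c) by (apply crit_ratio_decreasing; lra).
  pose proof (scaled_h_pos c ltac:(lra)).
  assert (scaled_h a b c * (1 - crit_ratio a b c) / c < 0).
  { apply Rdiv_neg_pos; [apply Rmult_pos_neg|]; lra. }
  nra.
Qed.

Lemma scaled_h_increasing x y : m0 <= x -> x < y -> scaled_h a b x < scaled_h a b y.
Proof.
  intros Hx Hxy. destruct (scaled_h_mvt x y ltac:(lra) Hxy) as [c [Hc Hdiff]].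
  assert (crit_ratio a b c < crit_ratio a b m0) by (apply crit_ratio_decreasing; lra).
  pose proof (scaled_h_pos c ltac:(lra)).
  assert (0 < scaled_h a b c * (1 - crit_ratio a b c) / c).
  { apply Rdiv_lt_0_compat; [apply Rmult_lt_0_compat|]; lra. }
  nra.
Qed.

Lemma scaled_h_strict_min x : 0 < x -> x <> m0 -> scaled_h a b m0 < scaled_h a b x.
Proof.
  intros Hx Hne. destruct (Rlt_or_le x m0).
  - apply scaled_h_decreasing; lra.
  - apply scaled_h_increasing; lra.
Qed.

(* Since [1 - crit_ratio] vanishes at [m0], only its derivative contributes. *)
Lemma is_derive_scaled_h'_at_crit :
  is_derive (fun y => scaled_h a b y * (1 - crit_ratio a b y) / y) m0
    (scaled_h a b m0 / m0 * (INR a * exp_term (b - 1) m0 * tail_defect b m0 / exp_tail b m0 ^ 2)).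
Proof.
  pose proof (exp_tail_pos b Hb m0 Hm0).
  apply (is_derive_ext (fun y => (scaled_h a b y * / y) * (1 - crit_ratio a b y))).
  { intros y; simpl. unfold Rdiv. ring. }
  eapply is_derive_eq_val.
  - apply is_derive_Rmult.
    + apply is_derive_Rmult; [now apply is_derive_scaled_h|].
      apply is_derive_inv; [auto_derive; auto | lra].
    + apply is_derive_Rminus; [auto_derive; auto | now apply is_derive_crit_ratio].
  - cbv beta. rewrite Hcrit. field. lra.
Qed.

Lemma scaled_h_taylor : exists A B, 0 < A /\ 0 < B /\ forall x, 0 <= x <= 1 ->
  Rabs (scaled_h a b (m0 + x) - scaled_h a b m0 - A * x ^ 2) <= B * x ^ 3.
Proof.
  set (H1 := fun y => scaled_h a b y * (1 - crit_ratio a b y) / y).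
  assert (HH1 : forall y, 0 < y -> is_derive (scaled_h a b) y (H1 y)) by exact is_derive_scaled_h.
  destruct (derivable_n_deriv 3 _ H1 (derivable_n_scaled_h 4) HH1) as [H2 [HH2 HH2n]].
  assert (HH2m0 : H2 m0 = scaled_h a b m0 / m0 *
                            (INR a * exp_term (b - 1) m0 * tail_defect b m0 / exp_tail b m0 ^ 2)).
  { rewrite <- (is_derive_unique H1 m0 (H2 m0)) by now apply HH2.
    apply is_derive_unique, is_derive_scaled_h'_at_crit. }
  destruct (taylor2_bound_at_critical (scaled_h a b) H1 H2 m0 Hm0 HH1 HH2 HH2n) as [B HB].
  { unfold H1. rewrite Hcrit, Rminus_eq_0, Rmult_0_r. apply Rdiv_0_l. }
  exists (H2 m0 / 2), (Rmax B 1). split; [|split].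
  - rewrite HH2m0. pose proof (scaled_h_pos m0 Hm0). pose proof (crit_slope_pos m0 Hm0).
    apply Rdiv_lt_0_compat; [apply Rmult_lt_0_compat; [apply Rdiv_lt_0_compat|]|]; lra.
  - apply Rlt_le_trans with 1; [lra | apply Rmax_r].
  - intros x Hx. apply Rle_trans with (B * x ^ 3); [exact (HB x Hx)|].
    apply Rmult_le_compat_r; [apply pow_le; lra | apply Rmax_l].
Qed.

Lemma scaled_h_crossing s : 0 < s -> exists z, m0 < z /\ scaled_h a b z = scaled_h a b m0 + s ^ 2.
Proof.
  intros Hs. set (c := scaled_h a b m0 + s ^ 2).
  pose proof (pow_lt s 2 Hs). pose proof (scaled_h_pos m0 Hm0).
  set (M := m0 + c + 1).
  pose proof (scaled_h_ge_id M ltac:(unfold M, c; lra)).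
  destruct (Ranalysis5.IVT_interv (fun t => scaled_h a b t - c) m0 M) as [z [Hz Hzc]].
  - intros t Ht. apply continuity_pt_minus; [|apply continuity_pt_const; intros ? ?; reflexivity].
    apply continuity_pt_filterlim, (ex_derive_continuous (scaled_h a b)).
    eexists. apply is_derive_scaled_h. lra.
  - unfold M, c. lra.
  - unfold c. lra.
  - unfold M in *. lra.
  - exists z. split; [|lra]. destruct (Req_dec z m0) as [->|]; [unfold c in Hzc; lra | lra].
Qed.

Lemma scaled_h_root_expansion : exists K C eta, 0 < K /\ 0 < C /\ 0 < eta /\
  forall s z, 0 < s -> s ^ 2 <= eta -> m0 < z -> scaled_h a b z = scaled_h a b m0 + s ^ 2 ->
  Rabs (z - m0 - K * s) <= C * s ^ 2 /\ z - m0 <= 1 /\ (z - m0) ^ 2 <= C * s ^ 2.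
Proof.
  destruct scaled_h_taylor as [A [B [HA [HB Htaylor]]]].
  set (rho := Rmin 1 (A / (2 * B))).
  assert (Hrho : 0 < rho <= 1).
  { split; [apply Rmin_pos; [lra | apply Rdiv_lt_0_compat; lra] | apply Rmin_l]. }
  assert (HBrho : B * rho <= A / 2).
  { apply Rle_trans with (B * (A / (2 * B))); [apply Rmult_le_compat_l; [lra | apply Rmin_r]|].
    right. field. lra. }
  set (C := Rmax (2 * B / (A * A)) (2 / A)).
  assert (HC1 : 2 * B / (A * A) <= C) by apply Rmax_l.
  assert (HC2 : 2 / A <= C) by apply Rmax_r.
  exists (/ sqrt A), C, (scaled_h a b (m0 + rho) - scaled_h a b m0).
  split; [apply Rinv_0_lt_compat, sqrt_lt_R0; lra|].
  split; [apply Rlt_le_trans with (2 / A); [apply Rdiv_lt_0_compat; lra | exact HC2]|].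
  split; [pose proof (scaled_h_increasing m0 (m0 + rho) ltac:(lra) ltac:(lra)); lra|].
  intros s z Hs Hseta Hz Hzs.
  set (x := z - m0).
  assert (Hxrho : x <= rho).
  { destruct (Rle_or_lt x rho) as [|Hlt]; [assumption|].
    pose proof (scaled_h_increasing (m0 + rho) z ltac:(lra) ltac:(unfold x in Hlt; lra)). lra. }
  assert (Hx : 0 < x <= 1) by (unfold x in *; lra).
  assert (Hclose : Rabs (s ^ 2 - A * x ^ 2) <= B * x ^ 3).
  { specialize (Htaylor x ltac:(lra)).
    replace (m0 + x) with z in Htaylor by (unfold x; ring). rewrite Hzs in Htaylor.
    replace (s ^ 2 - A * x ^ 2) with (scaled_h a b m0 + s ^ 2 - scaled_h a b m0 - A * x ^ 2) by ring.
    exact Htaylor. }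
  destruct (sqrt_perturbation A B x s HA ltac:(lra) Hs Hclose) as [Hsq Hroot].
  { apply Rle_trans with (B * rho); [apply Rmult_le_compat_l|]; lra. }
  split; [|split; [lra|]].
  - replace (/ sqrt A * s) with (s / sqrt A) by (unfold Rdiv; ring).
    apply Rle_trans with (2 * B / (A * A) * s ^ 2); [exact Hroot|].
    apply Rmult_le_compat_r; [apply pow_le; lra | exact HC1].
  - apply Rle_trans with (2 / A * s ^ 2); [exact Hsq|].
    apply Rmult_le_compat_r; [apply pow_le; lra | exact HC2].
Qed.

End ScaledH.

Lemma mu_rk_of_strict_min r k m : 0 < m ->
  (forall x, 0 < x -> x <> m -> Hfun r k m < Hfun r k x) -> mu_rk r k = m.
Proof.
  intros Hm Hmin. unfold mu_rk.
  destruct (epsilon_spec (inhabits 0)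
    (fun m' => 0 < m' /\ forall x, 0 < x -> Hfun r k m' <= Hfun r k x)) as [Hpos Hle].
  - exists m. split; [exact Hm|]. intros x Hx.
    destruct (Req_dec x m) as [->|Hne]; [lra | left; now apply Hmin].
  - set (m' := epsilon _ _) in *. destruct (Req_dec m' m) as [|Hne]; [assumption|].
    specialize (Hle m Hm). specialize (Hmin m' Hpos Hne). lra.
Qed.

Lemma c_rk_of_min r k m : 0 < m -> (forall x, 0 < x -> Hfun r k m <= Hfun r k x) ->
  c_rk r k = Hfun r k m.
Proof.
  intros Hm Hmin. unfold c_rk. rewrite (is_glb_Rbar_unique _ (Finite (Hfun r k m))); [reflexivity|].
  split.
  - intros y [x [Hx ->]]. now apply Hmin.
  - intros l Hl. apply Hl. now exists m.
Qed.

Lemma mu_c_of_increasing r k c z : 0 < z -> Hfun r k z = c ->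
  (forall x, z < x -> Hfun r k z < Hfun r k x) -> mu_c r k c = z.
Proof.
  intros Hz Hzc Hinc. unfold mu_c.
  destruct (epsilon_spec (inhabits 0) (fun m => 0 < m /\ c = Hfun r k m /\
              forall x, 0 < x -> c = Hfun r k x -> x <= m)) as [Hpos [Hc Hmax]].
  - exists z. split; [exact Hz|]. split; [now symmetry|]. intros x Hx Hxc.
    destruct (Rle_or_lt x z) as [|Hlt]; [assumption|]. specialize (Hinc x Hlt). lra.
  - set (m := epsilon _ _) in *.
    assert (m <= z).
    { destruct (Rle_or_lt m z) as [|Hlt]; [assumption|]. specialize (Hinc m Hlt). lra. }
    assert (z <= m) by (apply Hmax; [exact Hz | now symmetry]).
    lra.
Qed.

Lemma Rpower_opp_small delta eta : 0 < delta -> 0 < eta ->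
  exists N, forall n, (N <= n)%nat -> Rpower (INR n) (- delta) <= eta.
Proof.
  intros Hdelta Heta. set (X := exp (- ln eta / delta)).
  destruct (INR_archimed 1 X ltac:(lra)) as [N HN]. rewrite Rmult_1_r in HN.
  assert (HX : 0 < X) by apply exp_pos.
  exists N. intros n Hn.
  assert (HnX : X < INR n) by (apply Rlt_le_trans with (INR N); [lra | now apply le_INR]).
  assert (Hln : - ln eta / delta <= ln (INR n)).
  { rewrite <- (ln_exp (- ln eta / delta)). apply Rcomplements.ln_le; fold X; lra. }
  assert (Hexp : - delta * ln (INR n) <= ln eta).
  { apply Rmult_le_compat_l with (r := delta) in Hln; [|lra].
    replace (delta * (- ln eta / delta)) with (- ln eta) in Hln by (field; lra). lra. }
  unfold Rpower. rewrite <- (exp_ln eta) by exact Heta.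
  destruct Hexp as [Hlt|Heq]; [left; now apply exp_increasing | right; now rewrite Heq].
Qed.

Lemma Rpower_half_sq x delta : Rpower x (- (delta / 2)) ^ 2 = Rpower x (- delta).
Proof. simpl. rewrite Rmult_1_r, <- Rpower_plus. f_equal. field. Qed.

Definition root_asymptotics (z : nat -> R) (m K delta : R) : Prop :=
  exists C N, forall n, (N <= n)%nat ->
    let s := Rpower (INR n) (- (delta / 2)) in
    m < z n /\ Rabs (z n - m - K * s) <= C * s ^ 2 /\ z n - m <= 1 /\ (z n - m) ^ 2 <= C * s ^ 2.

Lemma expansion_of_root_asymptotics z m K delta :
  root_asymptotics z m K delta -> expansion (fun n => z n - m) K delta.
Proof.
  intros [C [N Hz]]. exists C, N. intros n Hn.
  rewrite <- (Rpower_half_sq (INR n) delta). now destruct (Hz n Hn) as (_ & Hlin & _).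
Qed.

Lemma expansion_of_smooth_image F F1 z m K delta : 0 < m ->
  (forall x, 0 < x -> is_derive F x (F1 x)) -> derivable_n 2 F1 ->
  root_asymptotics z m K delta -> expansion (fun n => F (z n) - F m) (F1 m * K) delta.
Proof.
  intros Hm HF HF1 [C [N Hz]].
  destruct (taylor1_bound F F1 m Hm HF HF1) as [B HB].
  exists (Rabs B * C + Rabs (F1 m) * C), N. intros n Hn.
  rewrite <- (Rpower_half_sq (INR n) delta). set (s := Rpower (INR n) (- (delta / 2))).
  destruct (Hz n Hn) as (Hzm & Hlin & Hz1 & Hsq). fold s in Hlin, Hsq.
  specialize (HB (z n - m) ltac:(lra)). replace (m + (z n - m)) with (z n) in HB by ring.
  replace (F (z n) - F m - F1 m * K * s) with
    ((F (z n) - F m - F1 m * (z n - m)) + F1 m * (z n - m - K * s)) by ring.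
  eapply Rle_trans; [apply Rabs_triang|]. rewrite Rmult_plus_distr_r. apply Rplus_le_compat.
  - apply Rle_trans with (Rabs B * (z n - m) ^ 2).
    + apply Rle_trans with (B * (z n - m) ^ 2); [exact HB|].
      apply Rmult_le_compat_r; [apply pow2_ge_0 | apply RRle_abs].
    + rewrite Rmult_assoc. apply Rmult_le_compat_l; [apply Rabs_pos | exact Hsq].
  - rewrite Rabs_mult, Rmult_assoc. apply Rmult_le_compat_l; [apply Rabs_pos | exact Hlin].
Qed.

Lemma mu_c_root_asymptotics r k : (2 <= r)%nat -> (2 <= k)%nat -> ~ (r = 2%nat /\ k = 2%nat) ->
  0 < mu_rk r k /\ exists K, 0 < K /\ forall delta, 0 < delta ->
    root_asymptotics (fun n => mu_c r k (c_rk r k + Rpower (INR n) (- delta))) (mu_rk r k) K delta.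
Proof.
  intros Hr Hk Hrk.
  assert (Ha : (1 <= r - 1)%nat) by lia. assert (Hb : (1 <= k - 1)%nat) by lia.
  assert (Hab : (2 <= (r - 1) * (k - 1))%nat) by nia.
  destruct (exists_crit_point _ _ Ha Hb Hab) as [m [Hm Hcrit]].
  assert (Hmin : forall x, 0 < x -> x <> m -> scaled_h (r - 1) (k - 1) m < scaled_h (r - 1) (k - 1) x)
    by exact (scaled_h_strict_min _ _ Ha Hb m Hm Hcrit).
  rewrite (mu_rk_of_strict_min r k m Hm Hmin).
  rewrite (c_rk_of_min r k m Hm); [|intros x Hx; destruct (Req_dec x m) as [->|]; [lra | left; now apply Hmin]].
  split; [exact Hm|].
  destruct (scaled_h_root_expansion _ _ Ha Hb m Hm Hcrit)
    as [K [C [eta [HK [HC [Heta Hroot]]]]]].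
  exists K. split; [exact HK|]. intros delta Hdelta.
  destruct (Rpower_opp_small delta eta Hdelta Heta) as [N HN].
  exists C, N. intros n Hn s.
  assert (Hs : 0 < s) by apply exp_pos.
  rewrite <- (Rpower_half_sq _ delta). fold s.
  destruct (scaled_h_crossing _ _ Ha Hb m Hm s Hs) as [z [Hzm Hz]].
  rewrite (mu_c_of_increasing r k _ z); [| lra | exact Hz |].
  - split; [exact Hzm|]. apply Hroot; [exact Hs | unfold s; rewrite Rpower_half_sq; now apply HN | exact Hzm | exact Hz].
  - intros x Hx. apply (scaled_h_increasing _ _ Ha Hb m Hm Hcrit); lra.
Qed.

Lemma alpha_c_expansion r k (c : nat -> R) K delta : (1 <= k)%nat -> 0 < mu_rk r k ->
  root_asymptotics (fun n => mu_c r k (c n)) (mu_rk r k) K delta ->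
  expansion (fun n => alpha_c r k (c n) - alpha0 r k)
    (exp (- mu_rk r k) * exp_term (k - 1) (mu_rk r k) * K) delta.
Proof.
  intros Hk Hm Hroot.
  apply (expansion_of_smooth_image (ftail k) (fun y => exp (- y) * exp_term (k - 1) y)
           (fun n => mu_c r k (c n))); [exact Hm | | | exact Hroot].
  - intros y _. now apply is_derive_ftail.
  - apply derivable_n_mult; [apply derivable_n_exp_opp | apply derivable_n_exp_term].
Qed.

Lemma beta_c_expansion r k (c : nat -> R) K delta : (2 <= k)%nat -> 0 < mu_rk r k ->
  root_asymptotics (fun n => mu_c r k (c n)) (mu_rk r k) K delta ->
  expansion (fun n => beta_c r k (c n) - beta0 r k)
    (/ INR r * (ftail (k - 1) (mu_rk r k)
       + mu_rk r k * (exp (- mu_rk r k) * exp_term (k - 1 - 1) (mu_rk r k))) * K) delta.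
Proof.
  intros Hk Hm Hroot.
  apply (expansion_of_smooth_image (fun y => / INR r * y * ftail (k - 1) y)
           (fun y => / INR r * (ftail (k - 1) y + y * (exp (- y) * exp_term (k - 1 - 1) y)))
           (fun n => mu_c r k (c n))); [exact Hm | | | exact Hroot].
  - intros y _. eapply is_derive_eq_val.
    + apply is_derive_Rmult; [apply is_derive_scal; auto_derive; auto | apply is_derive_ftail; lia].
    + ring.
  - apply derivable_n_scal, derivable_n_plus; [apply derivable_n_ftail; lia|].
    apply derivable_n_mult; [apply derivable_n_id|].
    apply derivable_n_mult; [apply derivable_n_exp_opp | apply derivable_n_exp_term].
Qed.

Theorem lemma34 (r k : nat) :
  (2 <= r)%nat -> (2 <= k)%nat -> ~ (r = 2%nat /\ k = 2%nat) ->
  exists K1 K2 K3 : R, 0 < K1 /\ 0 < K2 /\ 0 < K3 /\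
    forall delta : R, 0 < delta -> delta < 1 / 2 ->
      let c := fun n : nat => c_rk r k + Rpower (INR n) (- delta) in
      expansion (fun n => mu_c r k (c n) - mu_rk r k) K1 delta /\
      expansion (fun n => alpha_c r k (c n) - alpha0 r k) K2 delta /\
      expansion (fun n => beta_c r k (c n) - beta0 r k) K3 delta.
Proof.
  intros Hr Hk Hrk.
  destruct (mu_c_root_asymptotics r k Hr Hk Hrk) as [Hm [K [HK Hroot]]].
  exists K, (exp (- mu_rk r k) * exp_term (k - 1) (mu_rk r k) * K),
    (/ INR r * (ftail (k - 1) (mu_rk r k)
       + mu_rk r k * (exp (- mu_rk r k) * exp_term (k - 1 - 1) (mu_rk r k))) * K).
  pose proof (exp_pos (- mu_rk r k)) as Hexp.
  pose proof (exp_term_pos (k - 1) _ Hm). pose proof (exp_term_pos (k - 1 - 1) _ Hm).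
  pose proof (ftail_pos (k - 1) _ ltac:(lia) Hm).
  assert (0 < / INR r) by (apply Rinv_0_lt_compat, lt_0_INR; lia).
  split; [exact HK|]. split; [apply Rmult_lt_0_compat; [apply Rmult_lt_0_compat|]; assumption|].
  split.
  { apply Rmult_lt_0_compat; [apply Rmult_lt_0_compat|]; [assumption| |assumption].
    apply Rplus_lt_0_compat; [assumption|]. now apply Rmult_lt_0_compat, Rmult_lt_0_compat. }
  intros delta Hdelta _ c. specialize (Hroot delta Hdelta).
  split; [|split].
  - exact (expansion_of_root_asymptotics _ _ _ _ Hroot).
  - apply alpha_c_expansion; [lia | exact Hm | exact Hroot].
  - apply beta_c_expansion; [exact Hk | exact Hm | exact Hroot].
Qed.
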